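(* Let $n\in\mathbb N$, $a_k=k/(n+1)$ for $0\le k\le n+1$, and $g_n(x)=\sum_{k=0}^n\binom nk(-1)^k\chi_{(a_k,a_{k+1})}(x)$. Define $G_n(x)=\int_0^x\cdots\int_0^{x_{i+1}}\cdots\int_0^{x_2}g_n(x_1)\,dx_1\ldots dx_i\ldots dx_n$ (the $n$-fold iterated integral of $g_n$ from $0$). Then $G_n\in C^{n-1}([0,1])$, $G_n(x)=O(x^n)$ as $x\to0^+$, $G_n(x)=O((x-1)^n)$ as $x\to1^-$, and $G_n>0$ on $(0,1)$.
   Context: $\chi_{(a,b)}$ denotes the indicator function of the interval $(a,b)$. *)

From Stdlib Require Import Reals.
From Coquelicot Require Import Coquelicot.
Open Scope R_scope.

Definition chi (a b x : R) : R :=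
  if Rlt_dec a x then (if Rlt_dec x b then 1 else 0) else 0.

Definition a_pt (n k : nat) : R := INR k / INR (S n).

Definition g_fun (n : nat) (x : R) : R :=
  sum_f_R0 (fun k => Binomial.C n k * (-1) ^ k * chi (a_pt n k) (a_pt n (S k)) x) n.

Fixpoint iter_int (i : nat) (f : R -> R) : R -> R :=
  match i with
  | O => f
  | S j => fun x => RInt (iter_int j f) 0 x
  end.

Definition G_fun (n : nat) : R -> R := iter_int n (g_fun n).

(* f is C^m on [0,1]: the derivatives f, f', ..., f^(m) exist at every point of
   [0,1] (f being defined on all of R), and f^(m) is continuous on [0,1]
   (continuity relative to [0,1]). *)
Definition C_on_01 (m : nat) (f : R -> R) : Prop :=
  (forall k x, (k < m)%nat -> 0 <= x <= 1 -> ex_derive (Derive_n f k) x) /\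
  (forall x, 0 <= x <= 1 ->
     filterlim (Derive_n f m) (within (fun y => 0 <= y <= 1) (locally x))
               (locally (Derive_n f m x))).

(* Write h = 1/(n+1), P_j(y) = y_+^j / j! for the truncated powers and
   (Δf)(x) = f(x) - f(x - h) for the backward difference.  Expanding Δ^(n+1) by
   the binomial formula shows that the integral of g_n from 0 is Δ^(n+1) P_1,
   and integrating further gives G_n = Δ^(n+1) P_n, a B-spline with knots a_k.
   Its derivatives of order k < n are the continuous functions Δ^(n+1) P_(n-k).
   Near 0 only the term P_n(x) = x^n/n! survives.  Near 1 one writes
   P_n(y) = y^n/n! - (-1)^n P_n(-y); Δ^(n+1) kills the polynomial part, leaving
   G_n(x) = P_n(1 - x).  Positivity follows by induction on the degree from
   Δ^(m+1) P_(j+1)(x) = ∫_(x-h)^x Δ^m P_j, starting from the hat function Δ^2 P_1. *)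

From Stdlib Require Import Reals Lra Lia Factorial.
From Coquelicot Require Import Coquelicot.
Open Scope R_scope.

Definition tpow (j : nat) (y : R) : R := ((y + Rabs y) / 2) ^ j / INR (fact j).

Lemma tpow_nonpos j y : y <= 0 -> tpow (S j) y = 0.
Proof.
  intro Hy; unfold tpow; rewrite Rabs_left1 by lra.
  replace ((y + - y) / 2) with 0 by field; rewrite pow_i by lia; unfold Rdiv; ring.
Qed.

Lemma tpow_nonneg j y : 0 <= y -> tpow j y = y ^ j / INR (fact j).
Proof. intro Hy; unfold tpow; rewrite Rabs_pos_eq by lra; f_equal; f_equal; field. Qed.

Lemma Rabs_tpow_le j y : Rabs (tpow j y) <= Rabs y ^ j.
Proof.
  assert (Hp : 0 <= (y + Rabs y) / 2 <= Rabs y).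
  { pose proof (Rle_abs y); pose proof (Rle_abs (- y)); rewrite Rabs_Ropp in *; lra. }
  pose proof (INR_fact_lt_0 j) as Hf.
  assert (Hf1 : 1 <= INR (fact j)) by (apply (le_INR 1), lt_O_fact).
  unfold tpow; rewrite Rabs_pos_eq.
  - apply (Rle_trans _ (((y + Rabs y) / 2) ^ j)).
    + apply Rmult_le_reg_r with (INR (fact j)); [lra|].
      unfold Rdiv; rewrite Rmult_assoc, Rinv_l, Rmult_1_r by lra.
      pose proof (pow_le _ j (proj1 Hp)); nra.
    + apply pow_incr; exact Hp.
  - apply Rdiv_le_0_compat; [apply pow_le|]; lra.
Qed.

Lemma pow_neg1_mul_self k : (-1) ^ k * (-1) ^ k = 1.
Proof. rewrite <- Rpow_mult_distr; replace (-1 * -1) with 1 by ring; apply pow1. Qed.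

Lemma tpow_reflect j y :
  tpow (S j) y = 1 * (y ^ S j / INR (fact (S j))) + - (-1) ^ S j * tpow (S j) (- y).
Proof.
  destruct (Rle_lt_dec 0 y) as [Hy|Hy].
  - rewrite tpow_nonneg, (tpow_nonpos j (- y)) by lra; unfold Rdiv; ring.
  - rewrite tpow_nonpos, tpow_nonneg by lra.
    replace (- y) with (-1 * y) by ring; rewrite Rpow_mult_distr.
    transitivity (y ^ S j / INR (fact (S j)) * (1 - (-1) ^ S j * (-1) ^ S j));
      [rewrite pow_neg1_mul_self|]; unfold Rdiv; ring.
Qed.

Lemma continuous_tpow j x : continuous (tpow j) x.
Proof.
  apply (continuous_comp (fun y => (y + Rabs y) / 2) (fun u => u ^ j / INR (fact j))).
  - apply (continuous_mult (fun y => y + Rabs y) (fun _ => / 2)); [|apply continuous_const].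
    apply (continuous_plus (fun y => y) Rabs); [apply continuous_id|apply continuous_Rabs].
  - apply (ex_derive_continuous (V := R_NormedModule)); auto_derive; auto.
Qed.

Lemma is_derive_pow_fact j t :
  is_derive (fun u => u ^ S j / INR (fact (S j))) t (t ^ j / INR (fact j)).
Proof.
  rewrite (fact_simpl j), mult_INR.
  pose proof (INR_fact_lt_0 j); pose proof (pos_INR j).
  remember (INR (fact j)) as c.
  auto_derive; [auto|].
  change (match j with 0%nat => 1 | S _ => INR j + 1 end) with (INR (S j)).
  rewrite S_INR; field; lra.
Qed.

Lemma is_RInt_tpow k y : is_RInt (tpow (S k)) 0 y (tpow (S (S k)) y).
Proof.
  destruct (Rle_lt_dec 0 y) as [Hy|Hy].
  - set (F t := t ^ S (S k) / INR (fact (S (S k)))).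
    apply (is_RInt_ext (fun t => t ^ S k / INR (fact (S k)))).
    { intros t Ht; rewrite Rmin_left in Ht by lra; rewrite tpow_nonneg by lra; reflexivity. }
    replace (tpow (S (S k)) y) with (minus (F y) (F 0)).
    2:{ unfold F; rewrite tpow_nonneg by lra; rewrite pow_i by lia.
        change (minus ?a ?b) with (a - b); unfold Rdiv; rewrite Rmult_0_l; apply Rminus_0_r. }
    apply (is_RInt_derive (V := R_CompleteNormedModule)).
    + intros t _; apply is_derive_pow_fact.
    + intros t _; apply (ex_derive_continuous (V := R_NormedModule)); auto_derive; auto.
  - apply (is_RInt_ext (fun _ => 0)).
    { intros t Ht; rewrite Rmax_left in Ht by lra; rewrite tpow_nonpos by lra; reflexivity. }
    replace (tpow (S (S k)) y) with (scal (y - 0) 0)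
      by (rewrite tpow_nonpos by lra; apply Rmult_0_r).
    exact (is_RInt_const (V := R_NormedModule) 0 y 0).
Qed.

Lemma is_derive_tpow k y : is_derive (tpow (S (S k))) y (tpow (S k) y).
Proof.
  apply (is_derive_RInt (tpow (S k)) (tpow (S (S k))) 0).
  - apply filter_forall, is_RInt_tpow.
  - apply continuous_tpow.
Qed.

Fixpoint bdiff (h : R) (m : nat) (f : R -> R) (x : R) : R :=
  match m with
  | O => f x
  | S m' => bdiff h m' f x - bdiff h m' f (x - h)
  end.

Lemma bdiff_lin h m f g1 g2 a b x :
  (forall y, f y = a * g1 y + b * g2 y) ->
  bdiff h m f x = a * bdiff h m g1 x + b * bdiff h m g2 x.
Proof. intro Hf; revert x; induction m; intro x; simpl; rewrite ?IHm; [apply Hf|ring]. Qed.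

Lemma is_derive_bdiff h m f df x :
  (forall y, is_derive f y (df y)) -> is_derive (bdiff h m f) x (bdiff h m df x).
Proof.
  intro Hf; revert x; induction m; intro x; simpl; [apply Hf|].
  apply (is_derive_minus (bdiff h m f) (fun y => bdiff h m f (y - h))); [apply IHm|].
  apply (is_derive_comp (bdiff h m f) (fun y => y - h) x _ 1) in IHm.
  - change (scal 1 ?v) with (1 * v) in IHm; rewrite Rmult_1_l in IHm; exact IHm.
  - auto_derive; auto; ring.
Qed.

Lemma continuous_bdiff h m f x :
  (forall y, continuous f y) -> continuous (bdiff h m f) x.
Proof.
  intro Hf; revert x; induction m; intro x; simpl; [apply Hf|].
  apply (continuous_minus (bdiff h m f) (fun y => bdiff h m f (y - h))); [apply IHm|].
  apply (continuous_comp (fun y => y - h) (bdiff h m f)); [|apply IHm].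
  apply (continuous_minus (fun y : R => y) (fun _ => h));
    [apply continuous_id|apply continuous_const].
Qed.

Lemma is_RInt_bdiff h m F f a b :
  (forall y, is_derive F y (f y)) -> (forall y, continuous f y) ->
  is_RInt (bdiff h m f) a b (bdiff h m F b - bdiff h m F a).
Proof.
  intros HF Hf; apply (is_RInt_derive (V := R_CompleteNormedModule) (bdiff h m F)).
  - intros t _; apply is_derive_bdiff, HF.
  - intros t _; apply continuous_bdiff, Hf.
Qed.

Lemma bdiff_near_left h m f x :
  0 < h -> (forall y, y <= 0 -> f y = 0) -> x <= h -> bdiff h m f x = f x.
Proof.
  intros Hh Hf; revert x; induction m; intros x Hx; simpl; [reflexivity|].
  rewrite !IHm, (Hf (x - h)) by lra; ring.
Qed.

Lemma bdiff_near_right h m f x :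
  0 < h -> (forall y, 0 <= y -> f y = 0) -> INR m * h - h < x ->
  bdiff h m f x = (-1) ^ m * f (x - INR m * h).
Proof.
  intros Hh Hf; revert x; induction m; intros x Hx; simpl bdiff.
  - simpl; rewrite Rmult_0_l, Rminus_0_r; ring.
  - rewrite S_INR in *; rewrite !IHm, (Hf (x - INR m * h)) by lra.
    replace (x - h - INR m * h) with (x - (INR m + 1) * h) by ring; simpl; ring.
Qed.

Lemma bdiff_pow_fact_lt h m j x :
  (j < m)%nat -> bdiff h m (fun y => y ^ j / INR (fact j)) x = 0.
Proof.
  revert j x; induction m as [|m IHm]; intros j x Hj; [lia|]; simpl bdiff.
  destruct (Nat.lt_ge_cases j m) as [Hlt|Hge]; [rewrite !IHm by exact Hlt; ring|].
  destruct j as [|j]; [replace m with 0%nat by lia; simpl; ring|].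
  assert (Hcont : forall y, continuous (fun u => u ^ j / INR (fact j)) y).
  { intro y; apply (ex_derive_continuous (V := R_NormedModule)); auto_derive; auto. }
  refine (eq_trans (eq_sym (is_RInt_unique _ _ _ _
            (is_RInt_bdiff h m _ _ (x - h) x (is_derive_pow_fact j) Hcont))) _).
  rewrite (RInt_ext _ (fun _ => 0)), RInt_const by (intros; apply IHm; lia).
  apply Rmult_0_r.
Qed.

(* [Binomial.C m k] is not 0 for [k > m] (truncated subtraction in its
   denominator), so the recursion of Pascal's rule needs the zero extension. *)
Definition binomz (m k : nat) : R := if Nat.leb k m then Binomial.C m k else 0.

Lemma binomz_0 m : binomz m 0 = 1.
Proof. apply C_n_0. Qed.

Lemma binomz_gt m k : (m < k)%nat -> binomz m k = 0.
Proof. intro H; unfold binomz; rewrite (proj2 (Nat.leb_gt k m) H); reflexivity. Qed.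

Lemma binomz_le m k : (k <= m)%nat -> binomz m k = Binomial.C m k.
Proof. intro H; unfold binomz; rewrite (proj2 (Nat.leb_le k m) H); reflexivity. Qed.

Lemma binomz_pascal m k : binomz (S m) (S k) = binomz m k + binomz m (S k).
Proof.
  destruct (Nat.lt_trichotomy k m) as [H|[<-|H]].
  - rewrite !binomz_le by lia; symmetry; apply pascal, H.
  - rewrite (binomz_gt k (S k)), !binomz_le, !C_n_n by lia; ring.
  - rewrite !binomz_gt by lia; ring.
Qed.

Lemma bdiff_binomz h m f x :
  bdiff h m f x = sum_f_R0 (fun k => binomz m k * (-1) ^ k * f (x - INR k * h)) m.
Proof.
  revert x; induction m as [|m IHm]; intro x; simpl bdiff.
  - simpl; rewrite binomz_0, Rmult_0_l, Rminus_0_r; ring.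
  - rewrite !IHm.
    set (t := fun k => (-1) ^ k * f (x - INR k * h)).
    set (A := sum_f_R0 (fun k => binomz m (S k) * t (S k)) m).
    set (B := sum_f_R0 (fun k => binomz m k * t (S k)) m).
    assert (Hlhs : sum_f_R0 (fun k => binomz (S m) k * (-1) ^ k * f (x - INR k * h)) (S m)
                   = t 0%nat + (B + A)).
    { rewrite decomp_sum by lia; simpl pred; rewrite binomz_0.
      unfold A, B; rewrite <- plus_sum.
      unfold t; f_equal; [ring|]; apply sum_eq; intros k _; rewrite binomz_pascal; ring. }
    assert (Hcur : sum_f_R0 (fun k => binomz m k * (-1) ^ k * f (x - INR k * h)) m
                   = t 0%nat + A).
    { transitivity (sum_f_R0 (fun k => binomz m k * t k) (S m)).
      - rewrite tech5, binomz_gt, Rmult_0_l, Rplus_0_r by lia.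
        apply sum_eq; intros k _; unfold t; ring.
      - rewrite decomp_sum by lia; simpl pred; rewrite binomz_0, Rmult_1_l; reflexivity. }
    assert (Hprev : sum_f_R0 (fun k => binomz m k * (-1) ^ k * f (x - h - INR k * h)) m
                    = - B).
    { replace (- B) with (-1 * B) by ring; unfold B; rewrite scal_sum.
      apply sum_eq; intros k _; unfold t; rewrite S_INR; simpl pow.
      replace (x - h - INR k * h) with (x - (INR k + 1) * h) by ring; ring. }
    rewrite Hlhs, Hcur, Hprev; ring.
Qed.

Lemma is_RInt_const_on (f : R -> R) u v c :
  (forall t, Rmin u v < t < Rmax u v -> f t = c) -> is_RInt f u v ((v - u) * c).
Proof.
  intro Hf; apply (is_RInt_ext (fun _ => c)); [intros t Ht; symmetry; apply Hf, Ht|].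
  exact (is_RInt_const (V := R_NormedModule) u v c).
Qed.

Lemma is_RInt_chi_out a b u v :
  Rmax u v <= a \/ b <= Rmin u v -> is_RInt (chi a b) u v 0.
Proof.
  intro H; rewrite <- (Rmult_0_r (v - u)); apply is_RInt_const_on.
  intros t Ht; unfold chi; destruct (Rlt_dec a t), (Rlt_dec t b); lra.
Qed.

Lemma is_RInt_chi_in a b u v : a <= u <= v -> v <= b -> is_RInt (chi a b) u v (v - u).
Proof.
  intros Hu Hv; rewrite <- (Rmult_1_r (v - u)); apply is_RInt_const_on.
  rewrite Rmin_left, Rmax_right by lra.
  intros t Ht; unfold chi; destruct (Rlt_dec a t), (Rlt_dec t b); lra.
Qed.

Lemma is_RInt_chi a b x :
  0 <= a < b -> is_RInt (chi a b) 0 x (tpow 1 (x - a) - tpow 1 (x - b)).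
Proof.
  intro Hab.
  assert (Htpow1 : forall y, 0 <= y -> tpow 1 y = y)
    by (intros y Hy; rewrite tpow_nonneg by lra; simpl; field).
  destruct (Rle_lt_dec x a) as [Hxa|Hax]; [|destruct (Rle_lt_dec x b) as [Hxb|Hbx]].
  - rewrite !tpow_nonpos, Rminus_0_r by lra.
    apply is_RInt_chi_out; left; apply Rmax_lub; lra.
  - rewrite Htpow1, tpow_nonpos by lra.
    replace (x - a - 0) with (0 + (x - a)) by ring.
    apply (is_RInt_Chasles (V := R_NormedModule) _ 0 a x).
    + apply is_RInt_chi_out; left; apply Rmax_lub; lra.
    + apply is_RInt_chi_in; lra.
  - rewrite !Htpow1 by lra.
    replace (x - a - (x - b)) with (0 + (b - a) + 0) by ring.
    apply (is_RInt_Chasles (V := R_NormedModule) _ 0 b x);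
      [apply (is_RInt_Chasles (V := R_NormedModule) _ 0 a b)|].
    + apply is_RInt_chi_out; left; apply Rmax_lub; lra.
    + apply is_RInt_chi_in; lra.
    + apply is_RInt_chi_out; right; apply Rmin_glb; lra.
Qed.

Lemma is_RInt_sum_f_R0 (F : nat -> R -> R) (I : nat -> R) a b N :
  (forall k, (k <= N)%nat -> is_RInt (F k) a b (I k)) ->
  is_RInt (fun t => sum_f_R0 (fun k => F k t) N) a b (sum_f_R0 I N).
Proof.
  intro HF; induction N as [|N IHN]; [apply HF; lia|].
  apply (is_RInt_plus (fun t => sum_f_R0 (fun k => F k t) N) (F (S N)));
    [apply IHN; intros; apply HF|apply HF]; lia.
Qed.

Lemma is_RInt_g_fun n x :
  is_RInt (g_fun n) 0 x (bdiff (/ INR (S n)) (S n) (tpow 1) x).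
Proof.
  set (h := / INR (S n)).
  assert (Hh : 0 < h) by (apply Rinv_0_lt_compat, lt_0_INR; lia).
  assert (Ha : forall k, a_pt n k = INR k * h) by reflexivity.
  simpl bdiff; rewrite !bdiff_binomz, <- minus_sum.
  apply (is_RInt_sum_f_R0
           (fun k t => Binomial.C n k * (-1) ^ k * chi (a_pt n k) (a_pt n (S k)) t)).
  intros k Hk.
  assert (Hterm : binomz n k * (-1) ^ k * tpow 1 (x - INR k * h)
                  - binomz n k * (-1) ^ k * tpow 1 (x - h - INR k * h)
                  = scal (Binomial.C n k * (-1) ^ k)
                      (tpow 1 (x - a_pt n k) - tpow 1 (x - a_pt n (S k)))).
  { change (scal ?u ?v) with (u * v); rewrite binomz_le, !Ha, S_INR by exact Hk.
    replace (x - (INR k + 1) * h) with (x - h - INR k * h) by ring; ring. }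
  rewrite Hterm; apply (is_RInt_scal (chi (a_pt n k) (a_pt n (S k)))), is_RInt_chi.
  rewrite !Ha, S_INR; pose proof (pos_INR k); nra.
Qed.

Lemma iter_int_g_fun n j x : (1 <= j)%nat ->
  iter_int j (g_fun n) x = bdiff (/ INR (S n)) (S n) (tpow j) x.
Proof.
  set (h := / INR (S n)).
  assert (Hh : 0 < h) by (apply Rinv_0_lt_compat, lt_0_INR; lia).
  intro Hj; revert x; induction j as [|j IHj]; intro x; [lia|].
  destruct j as [|j]; simpl iter_int; [apply is_RInt_unique, is_RInt_g_fun|].
  rewrite (RInt_ext _ (bdiff h (S n) (tpow (S j)))) by (intros; apply IHj; lia).
  apply is_RInt_unique.
  replace (bdiff h (S n) (tpow (S (S j))) x)
    with (bdiff h (S n) (tpow (S (S j))) x - bdiff h (S n) (tpow (S (S j))) 0).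
  - apply is_RInt_bdiff; [apply is_derive_tpow|apply continuous_tpow].
  - rewrite (bdiff_near_left h (S n) _ 0), tpow_nonpos
      by (intros; try apply tpow_nonpos; lra); ring.
Qed.

Definition bspline (h : R) (j : nat) : R -> R := bdiff h (S (S j)) (tpow (S j)).

Lemma G_fun_bspline n x : G_fun (S n) x = bspline (/ INR (S (S n))) n x.
Proof. apply iter_int_g_fun; lia. Qed.

Lemma Derive_n_bdiff_tpow h m j k x : (k <= j)%nat ->
  Derive_n (bdiff h m (tpow (S j))) k x = bdiff h m (tpow (S j - k)) x.
Proof.
  revert x; induction k as [|k IHk]; intros x Hk; simpl; [rewrite ?Nat.sub_0_r; reflexivity|].
  rewrite (Derive_ext _ (bdiff h m (tpow (S j - k)))) by (intro; apply IHk; lia).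
  replace (S j - k)%nat with (S (S (j - S k))) by lia.
  replace (j - k)%nat with (S (j - S k)) by lia.
  apply is_derive_unique, is_derive_bdiff, is_derive_tpow.
Qed.

Lemma C_on_01_bdiff_tpow h m j : C_on_01 j (bdiff h m (tpow (S j))).
Proof.
  split.
  - intros k x Hk _; apply (ex_derive_ext (bdiff h m (tpow (S (S (j - S k)))))).
    + intro t; rewrite Derive_n_bdiff_tpow by lia; do 2 f_equal; lia.
    + eexists; apply is_derive_bdiff, is_derive_tpow.
  - intros x _; apply (filterlim_filter_le_1 (F := locally x)); [apply filter_le_within|].
    apply (continuous_ext (bdiff h m (tpow 1))).
    + intro t; rewrite Derive_n_bdiff_tpow, ?Nat.sub_diag by lia; do 2 f_equal; lia.
    + apply continuous_bdiff, continuous_tpow.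
Qed.

Lemma C_on_01_ext m f g : (forall x, f x = g x) -> C_on_01 m g -> C_on_01 m f.
Proof.
  intros Hfg [Hder Hcont]; split.
  - intros k x Hk Hx; apply (ex_derive_ext (Derive_n g k)); [|apply Hder; assumption].
    intro t; apply Derive_n_ext; intro; symmetry; apply Hfg.
  - intros x Hx; rewrite (Derive_n_ext f g) by exact Hfg.
    apply (filterlim_ext (Derive_n g m)); [|apply Hcont, Hx].
    intro t; apply Derive_n_ext; intro; symmetry; apply Hfg.
Qed.

Lemma bspline_near_start h j x : 0 < h -> x <= h -> bspline h j x = tpow (S j) x.
Proof. intros Hh Hx; apply bdiff_near_left; [exact Hh|apply tpow_nonpos|exact Hx]. Qed.

Lemma bspline_near_end h j x :
  0 < h -> INR (S j) * h < x -> bspline h j x = tpow (S j) (INR (S (S j)) * h - x).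
Proof.
  intros Hh Hx; unfold bspline.
  rewrite (bdiff_lin _ _ _ _ (fun y => tpow (S j) (- y)) _ _ _ (tpow_reflect j)).
  rewrite bdiff_pow_fact_lt by lia.
  rewrite bdiff_near_right; [|exact Hh|intros; apply tpow_nonpos; lra|rewrite S_INR; lra].
  replace (- (x - INR (S (S j)) * h)) with (INR (S (S j)) * h - x) by ring.
  transitivity ((-1) ^ S j * (-1) ^ S j * tpow (S j) (INR (S (S j)) * h - x));
    [simpl; ring|rewrite pow_neg1_mul_self; ring].
Qed.

Lemma continuous_bspline h j x : continuous (bspline h j) x.
Proof. apply continuous_bdiff, continuous_tpow. Qed.

Lemma bspline_succ h j x : bspline h (S j) x = RInt (bspline h j) (x - h) x.
Proof.
  symmetry; apply is_RInt_unique, (is_RInt_bdiff h (S (S j)) (tpow (S (S j)))).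
  - apply is_derive_tpow.
  - apply continuous_tpow.
Qed.

Lemma bspline_0 h x :
  bspline h 0 x =
  ((x + Rabs x) - 2 * (x - h + Rabs (x - h)) + (x - 2 * h + Rabs (x - 2 * h))) / 2.
Proof.
  unfold bspline, tpow; simpl.
  replace (x - h - h) with (x - 2 * h) by ring; field.
Qed.

Lemma RInt_gt_0_sub (f : R -> R) a b c d :
  a <= c < d -> d <= b -> (forall t, continuous f t) ->
  (forall t, a < t < b -> 0 <= f t) -> (forall t, c < t < d -> 0 < f t) ->
  0 < RInt f a b.
Proof.
  intros Hac Hdb Hf Hge Hgt.
  assert (Hex : forall u v, ex_RInt f u v)
    by (intros; apply (ex_RInt_continuous (V := R_CompleteNormedModule)); intros; apply Hf).
  rewrite <- (RInt_Chasles f a c b), <- (RInt_Chasles f c d b) by apply Hex.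
  change (plus ?u (plus ?v ?w)) with (u + (v + w)).
  assert (0 <= RInt f a c) by (apply RInt_ge_0; [lra|apply Hex|intros; apply Hge; lra]).
  assert (0 <= RInt f d b) by (apply RInt_ge_0; [lra|apply Hex|intros; apply Hge; lra]).
  assert (0 < RInt f c d) by (apply RInt_gt_0; [lra|exact Hgt|intros; apply Hf]).
  lra.
Qed.

Lemma bspline_ge0 h j x : 0 < h -> 0 <= bspline h j x.
Proof.
  intro Hh; revert x; induction j as [|j IHj]; intro x.
  - rewrite bspline_0; unfold Rabs.
    destruct (Rcase_abs x), (Rcase_abs (x - h)), (Rcase_abs (x - 2 * h)); lra.
  - rewrite bspline_succ; apply RInt_ge_0; [lra| |intros; apply IHj].
    apply (ex_RInt_continuous (V := R_CompleteNormedModule)); intros; apply continuous_bspline.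
Qed.

Lemma bspline_pos h j x : 0 < h -> 0 < x < INR (S (S j)) * h -> 0 < bspline h j x.
Proof.
  intro Hh; revert x; induction j as [|j IHj]; intros x Hx.
  - rewrite bspline_0; replace (INR 2) with 2 in Hx by (simpl; ring); unfold Rabs.
    destruct (Rcase_abs x), (Rcase_abs (x - h)), (Rcase_abs (x - 2 * h)); lra.
  - rewrite S_INR in Hx; rewrite bspline_succ.
    assert (0 < INR (S (S j)) * h) by (apply Rmult_lt_0_compat; [apply lt_0_INR; lia|lra]).
    apply (RInt_gt_0_sub _ _ _ (Rmax (x - h) 0) (Rmin x (INR (S (S j)) * h))).
    + split; [apply Rmax_l|apply Rmax_lub_lt; apply Rmin_glb_lt; lra].
    + apply Rmin_l.
    + apply continuous_bspline.
    + intros; apply bspline_ge0, Hh.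
    + intros t Ht; apply IHj; split.
      * apply Rle_lt_trans with (Rmax (x - h) 0); [apply Rmax_r|apply Ht].
      * apply Rlt_le_trans with (Rmin x (INR (S (S j)) * h)); [apply Ht|apply Rmin_r].
Qed.

Lemma G_fun_0 x : G_fun 0 x = chi 0 1 x.
Proof.
  unfold G_fun, g_fun, a_pt; simpl; rewrite C_n_0.
  replace (0 / 1) with 0 by field; replace (1 / 1) with 1 by field; ring.
Qed.

Theorem lemma6p4 (n : nat) :
  ((1 <= n)%nat -> C_on_01 (n - 1) (G_fun n)) /\
  (exists C delta, 0 < delta /\
     forall x, 0 < x < delta -> Rabs (G_fun n x) <= C * (Rabs x) ^ n) /\
  (exists C delta, 0 < delta /\
     forall x, 1 - delta < x < 1 -> Rabs (G_fun n x) <= C * (Rabs (x - 1)) ^ n) /\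
  (forall x, 0 < x < 1 -> 0 < G_fun n x).
Proof.
  destruct n as [|n].
  { assert (Hbound : forall x y, Rabs (G_fun 0 x) <= 1 * Rabs y ^ 0).
    { intros x y; rewrite G_fun_0; unfold chi; simpl.
      destruct (Rlt_dec 0 x), (Rlt_dec x 1); rewrite ?Rabs_R1, ?Rabs_R0; lra. }
    split; [lia|split; [|split]].
    - exists 1, 1; split; [lra|intros x _; apply Hbound].
    - exists 1, 1; split; [lra|intros x _; apply Hbound].
    - intros x Hx; rewrite G_fun_0; unfold chi.
      destruct (Rlt_dec 0 x), (Rlt_dec x 1); lra. }
  set (h := / INR (S (S n))).
  assert (Hh : 0 < h) by (apply Rinv_0_lt_compat, lt_0_INR; lia).
  assert (Hend : INR (S (S n)) * h = 1) by (apply Rinv_r, not_0_INR; lia).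
  assert (HG : forall x, G_fun (S n) x = bspline h n x) by apply G_fun_bspline.
  split; [|split; [|split]].
  - intros _; replace (S n - 1)%nat with n by lia.
    exact (C_on_01_ext _ _ _ HG (C_on_01_bdiff_tpow _ _ _)).
  - exists 1, h; split; [exact Hh|intros x Hx].
    rewrite HG, bspline_near_start, Rmult_1_l by lra; apply Rabs_tpow_le.
  - exists 1, h; split; [exact Hh|intros x Hx].
    rewrite HG, bspline_near_end, Hend, Rmult_1_l, Rabs_minus_sym.
    + apply Rabs_tpow_le.
    + exact Hh.
    + rewrite S_INR in Hend; lra.
  - intros x Hx; rewrite HG; apply bspline_pos; [exact Hh|rewrite Hend; exact Hx].
Qed.
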